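(* $$\sum_{k=1}^\infty\frac{12635k^2-5259k+832}{k\binom{4k}k}\left(\frac 98\right)^{k-1}=1944+\frac{640}{\sqrt3}\pi.$$ *)

From Stdlib Require Import Reals.
From Coquelicot Require Import Coquelicot.
Open Scope R_scope.

Definition lemma2p2_term (k : nat) : R :=
  (12635 * INR k ^ 2 - 5259 * INR k + 832)
    / (INR k * Binomial.C (4 * k) k) * (9 / 8) ^ (k - 1).

(* With y = 9/8 t (1-t)^3, the identity 1 / (k C(4k,k)) = int_0^1 t^(k-1) (1-t)^(3k) dt
   (a Beta integral) turns the series into int_0^1 (1-t)^3 sum_k P(k+1) y^k dt, where P is
   the quadratic numerator.  The inner power series sums to (1-t)^3 W(y) / (1-y)^3 for an
   explicit quadratic W, and since y <= 243/2048 < 1/8 on [0,1] the remainder after N terms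
   is O(N^2 8^-N) uniformly in t, which justifies the interchange.  The resulting rational
   function of t has an elementary antiderivative; its arctangent part atan(sqrt 3 t) /
   sqrt 3 contributes the term in pi. *)

From Stdlib Require Import Reals Lra Lia Factorial.
From Coquelicot Require Import Coquelicot.
Open Scope R_scope.

Lemma is_RInt_derive_R (f df : R -> R) (a b : R) :
  (forall x, Rmin a b <= x <= Rmax a b -> is_derive f x (df x)) ->
  (forall x, Rmin a b <= x <= Rmax a b -> continuous df x) ->
  is_RInt df a b (f b - f a).
Proof. exact (is_RInt_derive f df a b). Qed.

Lemma is_RInt_R_eq (f g : R -> R) (a b l l' : R) :
  (forall t, f t = g t) -> l = l' -> is_RInt f a b l -> is_RInt g a b l'.
Proof. intros Hfg <-. apply is_RInt_ext. intros t _. apply Hfg. Qed.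

Lemma is_RInt_pow_one_minus (m : nat) :
  is_RInt (fun t => (1 - t) ^ m) 0 1 (/ INR (S m)).
Proof.
  assert (hm : INR (S m) <> 0) by (apply not_0_INR; lia).
  replace (/ INR (S m)) with (- (1 - 1) ^ S m / INR (S m) - - (1 - 0) ^ S m / INR (S m)).
  - apply (is_RInt_derive_R (fun t => - (1 - t) ^ S m / INR (S m))).
    + intros t _. auto_derive; [easy|].
      (* auto_derive unfolds [INR (S m)] into its defining match. *)
      change (match m with 0%nat => 1 | S _ => INR m + 1 end) with (INR (S m)).
      change (1 + - t) with (1 - t). field. exact hm.
    + intros t _. apply (@ex_derive_continuous R_AbsRing R_NormedModule). auto_derive. easy.
  - rewrite Rminus_diag, Rminus_0_r, pow_i, pow1 by lia. field. exact hm.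
Qed.

Lemma is_RInt_beta_recursion (n m : nat) :
  is_RInt (fun t => INR (S n) * (t ^ n * (1 - t) ^ S m) - INR (S m) * (t ^ S n * (1 - t) ^ m))
    0 1 0.
Proof.
  replace 0 with (1 ^ S n * (1 - 1) ^ S m - 0 ^ S n * (1 - 0) ^ S m) at 2
    by (rewrite Rminus_diag, !pow_i by lia; ring).
  apply (is_RInt_derive_R (fun t => t ^ S n * (1 - t) ^ S m)).
  - intros t _. auto_derive; [easy|].
    change (match m with 0%nat => 1 | S _ => INR m + 1 end) with (INR (S m)).
    change (match n with 0%nat => 1 | S _ => INR n + 1 end) with (INR (S n)).
    change (1 + - t) with (1 - t). simpl. ring.
  - intros t _. apply (@ex_derive_continuous R_AbsRing R_NormedModule). auto_derive. easy.
Qed.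

Lemma is_RInt_beta (n m : nat) :
  is_RInt (fun t => t ^ n * (1 - t) ^ m) 0 1
    (INR (fact n) * INR (fact m) / INR (fact (n + m + 1))).
Proof.
  revert m; induction n as [|n IH]; intro m.
  - apply (is_RInt_R_eq (fun t => (1 - t) ^ m) _ 0 1 (/ INR (S m))).
    3: apply is_RInt_pow_one_minus.
    { intros t. simpl. ring. }
    rewrite Nat.add_0_l, Nat.add_1_r, fact_simpl, mult_INR. simpl (fact 0); simpl (INR 1).
    field. split; [apply INR_fact_neq_0 | apply not_0_INR; lia].
  - assert (hm : INR (S m) <> 0) by (apply not_0_INR; lia).
    eapply is_RInt_R_eq; [..| exact (is_RInt_scal _ 0 1 (/ INR (S m)) _
      (is_RInt_minus _ _ 0 1 _ _ (is_RInt_scal _ 0 1 (INR (S n)) _ (IH (S m)))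
        (is_RInt_beta_recursion n m)))].
    + intros t. repeat change (scal ?a ?b) with (a * b). change (minus ?a ?b) with (a - b).
      simpl. field. exact hm.
    + repeat change (scal ?a ?b) with (a * b). change (minus ?a ?b) with (a - b).
      replace (n + S m + 1)%nat with (S n + m + 1)%nat by lia.
      rewrite (fact_simpl n), (fact_simpl m), !mult_INR.
      field. split; [apply INR_fact_neq_0 | exact hm].
Qed.

Lemma inv_mul_binomial (n m : nat) :
  / (INR (S n) * Binomial.C (S n + m) (S n)) =
  INR (fact n) * INR (fact m) / INR (fact (n + m + 1)).
Proof.
  unfold Binomial.C.
  replace (S n + m - S n)%nat with m by lia.
  replace (S n + m)%nat with (n + m + 1)%nat by lia.
  rewrite (fact_simpl n), !mult_INR.
  assert (INR (S n) <> 0) by (apply not_0_INR; lia).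
  assert (INR (fact n) <> 0) by apply INR_fact_neq_0.
  assert (INR (fact m) <> 0) by apply INR_fact_neq_0.
  assert (INR (fact (n + m + 1)) <> 0) by apply INR_fact_neq_0.
  field. tauto.
Qed.

Lemma is_RInt_sum_n {V : NormedModule R_AbsRing} (f : nat -> R -> V) (I : nat -> V)
    (a b : R) (N : nat) :
  (forall k, is_RInt (f k) a b (I k)) ->
  is_RInt (fun t => sum_n (fun k => f k t) N) a b (sum_n I N).
Proof.
  intros HI. induction N as [|N IH].
  - rewrite sum_O. apply (is_RInt_ext (f 0%nat)); [intros t _; now rewrite sum_O | apply HI].
  - rewrite sum_Sn. apply (is_RInt_ext (fun t => plus (sum_n (fun k => f k t) N) (f (S N) t))).
    + intros t _. now rewrite sum_Sn.
    + exact (is_RInt_plus _ _ _ _ _ _ IH (HI (S N))).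
Qed.

Lemma is_lim_seq_of_RInt_uniform (g : R -> R) (f : nat -> R -> R) (a b L : R)
    (s eps : nat -> R) :
  a <= b -> is_RInt g a b L -> (forall N, is_RInt (f N) a b (s N)) ->
  (forall N t, a <= t <= b -> Rabs (g t - f N t) <= eps N) -> is_lim_seq eps 0 ->
  is_lim_seq s L.
Proof.
  intros hab Hg Hf Heps Hlim.
  assert (Hdist : forall N, Rabs (s N - L) <= (b - a) * eps N).
  { intro N. rewrite Rabs_minus_sym.
    apply (norm_RInt_le_const (fun t => g t - f N t) a b); [exact hab | exact (Heps N) |].
    exact (is_RInt_minus _ _ _ _ _ _ Hg (Hf N)). }
  assert (Hc : forall c, is_lim_seq (fun N => L + c * eps N) L).
  { intro c.
    assert (H := is_lim_seq_plus' _ _ L (c * 0) (is_lim_seq_const L)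
                   (is_lim_seq_scal_l _ c 0 Hlim)).
    rewrite Rmult_0_r, Rplus_0_r in H. exact H. }
  apply (is_lim_seq_le_le _ _ _ L) with (2 := Hc (- (b - a))) (3 := Hc (b - a)).
  intro N. specialize (Hdist N). apply Rabs_le_between' in Hdist. lra.
Qed.

Definition numer (k : nat) : R := 12635 * INR k ^ 2 - 5259 * INR k + 832.

Definition gf_numer (y : R) : R := 8208 + 16230 * y + 832 * y ^ 2.

Definition gf_tail (N : nat) (y : R) : R :=
  let n := INR N in
  (12635 * n ^ 2 + 45281 * n + 40854) + (-25270 * n ^ 2 - 65292 * n - 23792) * y
  + (12635 * n ^ 2 + 20011 * n + 8208) * y ^ 2.

Lemma partial_sum_numer (N : nat) (y : R) :
  (1 - y) ^ 3 * sum_n (fun k => numer (S k) * y ^ k) N = gf_numer y - y ^ S N * gf_tail N y.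
Proof.
  induction N as [|N IH].
  - rewrite sum_O. unfold numer, gf_numer, gf_tail. simpl. ring.
  - rewrite sum_Sn. change (plus ?a ?b) with (a + b).
    rewrite Rmult_plus_distr_l, IH. unfold numer, gf_numer, gf_tail. rewrite !S_INR. simpl. ring.
Qed.

Definition ysub (t : R) : R := 9 / 8 * (t * (1 - t) ^ 3).

Definition term_integrand (k : nat) (t : R) : R :=
  numer (S k) * (9 / 8) ^ k * (t ^ k * (1 - t) ^ (3 * S k)).

Lemma is_RInt_term_integrand (n : nat) :
  is_RInt (term_integrand n) 0 1 (lemma2p2_term (S n)).
Proof.
  eapply is_RInt_R_eq; [..| exact (is_RInt_scal _ 0 1 (numer (S n) * (9 / 8) ^ n) _
    (is_RInt_beta n (3 * S n)))].
  - intros t. reflexivity.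
  - change (scal ?a ?b) with (a * b).
    unfold lemma2p2_term. fold (numer (S n)).
    replace (S n - 1)%nat with n by lia.
    replace (4 * S n)%nat with (S n + 3 * S n)%nat by lia.
    rewrite <- inv_mul_binomial. unfold Rdiv. ring.
Qed.

Lemma sum_term_integrand (N : nat) (t : R) :
  sum_n (fun k => term_integrand k t) N =
  (1 - t) ^ 3 * sum_n (fun k => numer (S k) * ysub t ^ k) N.
Proof.
  rewrite <- (sum_n_mult_l ((1 - t) ^ 3)). apply sum_n_ext. intro k.
  unfold term_integrand, ysub. change (mult ?a ?b) with (a * b).
  rewrite pow_mult, !Rpow_mult_distr. simpl. ring.
Qed.

Definition integrand (t : R) : R := (1 - t) ^ 3 * gf_numer (ysub t) / (1 - ysub t) ^ 3.

Definition Q (t : R) : R := (1 + 3 * t ^ 2) * (3 * t ^ 2 - 9 * t + 8).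

Lemma Q_pos (t : R) : 0 < Q t.
Proof.
  unfold Q. apply Rmult_lt_0_compat.
  - generalize (pow2_ge_0 t). lra.
  - generalize (pow2_ge_0 (t - 3 / 2)). nra.
Qed.

Lemma one_minus_ysub (t : R) : 1 - ysub t = Q t / 8.
Proof. unfold ysub, Q. field. Qed.

Lemma integrand_sub_partial_sum (N : nat) (t : R) :
  integrand t - sum_n (fun k => term_integrand k t) N =
  (1 - t) ^ 3 * ysub t ^ S N * gf_tail N (ysub t) / (1 - ysub t) ^ 3.
Proof.
  assert (hy : 1 - ysub t <> 0) by (rewrite one_minus_ysub; generalize (Q_pos t); lra).
  rewrite sum_term_integrand.
  replace (sum_n _ N)
    with ((gf_numer (ysub t) - ysub t ^ S N * gf_tail N (ysub t)) / (1 - ysub t) ^ 3).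
  - unfold integrand. field. exact hy.
  - rewrite <- partial_sum_numer. field. exact hy.
Qed.

Lemma is_derive_atan_scaled (c t : R) :
  c <> 0 -> is_derive (fun t => atan (c * t) / c) t (/ (1 + c ^ 2 * t ^ 2)).
Proof.
  intro hc. auto_derive; [easy|].
  assert (0 <= (c * t) ^ 2) by apply pow2_ge_0.
  field. split; [nra | exact hc].
Qed.

(* The rational part comes from Hermite reduction of integrand t = 512 (1-t)^3 gf_numer
   (ysub t) / Q t ^ 3; the arctangent part comes from the factor 1 + 3 t^2 of Q. *)
Definition antideriv_poly (t : R) : R :=
  -504320/3 + t * (767360 + t * (-1507776 + t * (1352448 + t * (-648320
   + t * (217728 + t * (-63936 + t * 6912)))))).

Definition antideriv (t : R) : R :=
  antideriv_poly t / Q t ^ 2 - 1664 / 9 * ln (Q t) + 1920 * (atan (sqrt 3 * t) / sqrt 3).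

Lemma is_derive_antideriv (t : R) : is_derive antideriv t (integrand t).
Proof.
  assert (hQ := Q_pos t).
  assert (hq : 0 < 1 + 3 * t ^ 2) by (generalize (pow2_ge_0 t); lra).
  assert (Hrat : is_derive (fun t => antideriv_poly t / Q t ^ 2 - 1664 / 9 * ln (Q t)) t
                   (integrand t - 1920 / (1 + 3 * t ^ 2))).
  { replace (integrand t) with (512 * ((1 - t) ^ 3 * gf_numer (ysub t)) / Q t ^ 3)
      by (unfold integrand; rewrite one_minus_ysub; field; lra).
    unfold Q in *. unfold antideriv_poly, gf_numer, ysub. auto_derive.
    - simpl in hQ. repeat split; [| exact hQ].
      apply Rgt_not_eq, (Rmult_lt_0_compat _ _ hQ), Rmult_lt_0_compat; lra.
    - field. apply Rmult_neq_0_reg. lra. }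
  assert (Hatan := is_derive_scal _ t 1920 _
                    (is_derive_atan_scaled (sqrt 3) t (Rgt_not_eq _ _ Rlt_sqrt3_0))).
  rewrite pow2_sqrt in Hatan by lra.
  replace (integrand t) with (integrand t - 1920 / (1 + 3 * t ^ 2) + 1920 * / (1 + 3 * t ^ 2))
    by (field; lra).
  exact (is_derive_plus _ _ t _ _ Hrat Hatan).
Qed.

Lemma continuous_integrand (t : R) : continuous integrand t.
Proof.
  apply (@ex_derive_continuous R_AbsRing R_NormedModule).
  assert (hy : 1 - ysub t <> 0) by (rewrite one_minus_ysub; generalize (Q_pos t); lra).
  assert (Hy : ex_derive ysub t) by (unfold ysub; auto_derive; easy).
  unfold integrand, gf_numer. auto_derive.
  repeat split; try exact Hy.
  exact (pow_nonzero _ 3 hy).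
Qed.

Lemma atan_sqrt3 : atan (sqrt 3) = PI / 3.
Proof. rewrite <- tan_PI3. apply atan_tan. generalize PI_RGT_0. lra. Qed.

Lemma is_RInt_integrand : is_RInt integrand 0 1 (1944 + 640 / sqrt 3 * PI).
Proof.
  replace (1944 + 640 / sqrt 3 * PI) with (antideriv 1 - antideriv 0).
  - apply is_RInt_derive_R; intros t _; [apply is_derive_antideriv | apply continuous_integrand].
  - unfold antideriv, antideriv_poly. rewrite Rmult_1_r, Rmult_0_r, atan_sqrt3, atan_0.
    replace (Q 1) with 8 by (unfold Q; ring). replace (Q 0) with 8 by (unfold Q; ring).
    field. exact (Rgt_not_eq _ _ Rlt_sqrt3_0).
Qed.

Lemma ysub_bounds (t : R) : 0 <= t <= 1 -> 0 <= ysub t <= 1 / 8.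
Proof.
  intro ht. unfold ysub.
  assert (0 <= (1 - t) ^ 3) by (apply pow_le; lra).
  assert (0 <= t * (1 - t) ^ 3) by (apply Rmult_le_pos; lra).
  assert (27 / 256 - t * (1 - t) ^ 3 = (t - 1 / 4) ^ 2 * ((t - 5 / 4) ^ 2 + 1 / 8)) by field.
  assert (0 <= (t - 1 / 4) ^ 2 * ((t - 5 / 4) ^ 2 + 1 / 8)).
  { apply Rmult_le_pos; [apply pow2_ge_0 | generalize (pow2_ge_0 (t - 5 / 4)); lra]. }
  lra.
Qed.

Lemma gf_tail_bound (N : nat) (y : R) :
  0 <= y <= 1 / 8 -> Rabs (gf_tail N y) <= 131000 * INR (S N) ^ 2.
Proof.
  intro hy. unfold gf_tail. rewrite S_INR. set (n := INR N).
  assert (hn : 0 <= n) by apply pos_INR.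
  assert (0 <= n ^ 2) by (apply pow_le; lra).
  assert (0 <= n ^ 2 * y <= n ^ 2) by (split; [apply Rmult_le_pos |]; nra).
  assert (0 <= n * y <= n) by (split; [apply Rmult_le_pos |]; nra).
  assert (0 <= y ^ 2 <= y) by (split; [apply pow2_ge_0 | simpl; nra]).
  assert (0 <= n ^ 2 * y ^ 2 <= n ^ 2) by (split; [apply Rmult_le_pos |]; nra).
  assert (0 <= n * y ^ 2 <= n) by (split; [apply Rmult_le_pos |]; nra).
  apply Rabs_le. split; nra.
Qed.

Lemma INR_sqr_le_pow4 (n : nat) : INR n ^ 2 <= 4 ^ n.
Proof.
  assert (H : INR n <= 2 ^ n).
  { replace 2 with (INR 2) by reflexivity. rewrite <- pow_INR.
    apply le_INR, Nat.lt_le_incl, Nat.pow_gt_lin_r. lia. }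
  replace 4 with (2 ^ 2) by ring. rewrite <- pow_mult, Nat.mul_comm, pow_mult.
  apply pow_incr. split; [apply pos_INR | exact H].
Qed.

Lemma integrand_sub_partial_sum_bound (N : nat) (t : R) : 0 <= t <= 1 ->
  Rabs (integrand t - sum_n (fun k => term_integrand k t) N) <= 131000 * (1 / 2) ^ N.
Proof.
  intro ht. rewrite integrand_sub_partial_sum.
  destruct (ysub_bounds t ht) as [y0 y1]. set (y := ysub t) in *.
  assert (h1 : 0 <= (1 - t) ^ 3 <= 1).
  { split; [apply pow_le; lra | rewrite <- (pow1 3); apply pow_incr; lra]. }
  assert (h2 : 0 <= y ^ S N <= (1 / 8) ^ S N).
  { split; [apply pow_le; lra | apply pow_incr; lra]. }
  assert (h3 : Rabs (gf_tail N y) <= 131000 * 4 ^ S N).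
  { eapply Rle_trans; [apply (gf_tail_bound N y (conj y0 y1)) |].
    apply Rmult_le_compat_l; [lra | apply INR_sqr_le_pow4]. }
  assert (h4 : 0 <= / (1 - y) ^ 3 <= 2).
  { assert (0 < (1 - y) ^ 3) by (apply pow_lt; lra).
    assert ((7 / 8) ^ 3 <= (1 - y) ^ 3) by (apply pow_incr; lra).
    split; [apply Rlt_le, Rinv_0_lt_compat; lra |].
    apply (Rmult_le_reg_l ((1 - y) ^ 3)); [lra |]. rewrite Rinv_r by lra. lra. }
  unfold Rdiv. rewrite !Rabs_mult, (Rabs_pos_eq ((1 - t) ^ 3)), (Rabs_pos_eq (y ^ S N)),
    (Rabs_pos_eq (/ _)) by tauto.
  apply Rle_trans with (1 * (1 / 8) ^ S N * (131000 * 4 ^ S N) * 2).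
  - assert (0 <= (1 - t) ^ 3 * y ^ S N) by (apply Rmult_le_pos; tauto).
    assert (0 <= (1 - t) ^ 3 * y ^ S N * Rabs (gf_tail N y))
      by (apply Rmult_le_pos; [assumption | apply Rabs_pos]).
    apply Rmult_le_compat; [assumption | tauto | | tauto].
    apply Rmult_le_compat; [assumption | apply Rabs_pos | | exact h3].
    apply Rmult_le_compat; tauto.
  - apply Req_le. change (1 * / 2) with (1 / 2).
    assert (E : (1 / 8) ^ N * 4 ^ N = (1 / 2) ^ N)
      by (rewrite <- Rpow_mult_distr; f_equal; field).
    rewrite <- E, <- !tech_pow_Rmult. field.
Qed.

Theorem lemma2p2 :
  is_series (fun n : nat => lemma2p2_term (S n)) (1944 + 640 / sqrt 3 * PI).
Proof.
  change (is_lim_seq (sum_n (fun n => lemma2p2_term (S n))) (1944 + 640 / sqrt 3 * PI)).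
  apply (is_lim_seq_of_RInt_uniform integrand
           (fun N t => sum_n (fun k => term_integrand k t) N) 0 1 (1944 + 640 / sqrt 3 * PI)
           (sum_n (fun n => lemma2p2_term (S n))) (fun N => 131000 * (1 / 2) ^ N)).
  - lra.
  - exact is_RInt_integrand.
  - intro N. apply (is_RInt_sum_n term_integrand), is_RInt_term_integrand.
  - exact integrand_sub_partial_sum_bound.
  - assert (Hgeom : Rabs (1 / 2) < 1) by (rewrite Rabs_pos_eq; lra).
    rewrite <- (Rmult_0_r 131000).
    exact (is_lim_seq_scal_l _ 131000 0 (is_lim_seq_geom _ Hgeom)).
Qed.
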